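(* Let $K$ be a minimal complete valuation field and let $R$ and $S$ be unital $K$-Banach algebras. Then the canonical map $R\hat\otimes_{\mathbb Z}S\to R\hat\otimes_K S$ (identity on simple tensors) is an isometric isomorphism of Banach rings, and likewise the canonical map $R\hat\otimes^{\mathrm{um}}_{\mathbb Z}S\to R\hat\otimes^{\mathrm{um}}_K S$ is an isometric isomorphism.
   Context: A Banach ring is a ring complete w.r.t. a submultiplicative norm; unital means $\|1\|=1$. A complete valuation field $K$ is minimal if it has no proper closed subfield; up to isometric isomorphism these are $\mathbb Q$ and $\mathbb F_p$ with the trivial absolute value, $\mathbb R$ with $|\cdot|^\upsilon$ ($0<\upsilon\le 1$, $|\cdot|$ Euclidean), and $\mathbb Q_p$ with $|\cdot|_p^\omega$ ($\omega>0$). A unital $K$-Banach algebra is a unital Banach ring $A$ together with a contractive unital ring homomorphism from $K$ into the center of $A$. Projective tensor products: for a commutative unital Banach ring $T$ and Banach $T$-modules $X,Y$, on the algebraic tensor product $X\otimes_T Y$ put $\|z\|_\wedge=\inf\{\sum_k\|a_k\|\|b_k\|\}$ and $\|z\|^{\mathrm{um}}_\wedge=\inf\{\max_k\|a_k\|\|b_k\|\}$, the infima over all representations $z=\sum_{k=1}^n a_k\otimes b_k$; $X\hat\otimes_T Y$ (resp. $X\hat\otimes^{\mathrm{um}}_T Y$) is the completion of $X\otimes_T Y$ modulo the kernel of $\|\cdot\|_\wedge$ (resp. $\|\cdot\|^{\mathrm{um}}_\wedge$). Every unital Banach ring is regarded as a $\mathbb Z$-algebra, $\mathbb Z$ carrying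 the Euclidean absolute value; for unital Banach $T$-algebras these tensor products are Banach rings with $(a\otimes b)(c\otimes d)=ac\otimes bd$. *)

From Stdlib Require Import Reals ClassicalEpsilon.
From HB Require Import structures.
From mathcomp Require Import all_boot all_order all_algebra.
Set Implicit Arguments. Unset Strict Implicit. Unset Printing Implicit Defensive.
Import GRing.Theory.
Local Open Scope ring_scope.

Definition Rzero : R := IZR 0.
Definition Rone : R := IZR 1.

Definition cauchy_seq (A : zmodType) (nA : A -> R) (u : nat -> A) : Prop :=
  forall eps : R, Rlt Rzero eps ->
    exists N : nat, forall m n : nat, (N <= m)%N -> (N <= n)%N ->
      Rlt (nA (u m - u n)) eps.

Definition converges_to (A : zmodType) (nA : A -> R) (u : nat -> A) (l : A) : Prop :=
  Un_cv (fun n => nA (u n - l)) Rzero.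

Record BanachRing (A : nzRingType) (nA : A -> R) : Prop := {
  br_norm0 : nA 0 = Rzero;
  br_nonneg : forall x, Rle Rzero (nA x);
  br_definite : forall x, nA x = Rzero -> x = 0;
  br_opp : forall x, nA (- x) = nA x;
  br_triangle : forall x y, Rle (nA (x + y)) (Rplus (nA x) (nA y));
  br_submult : forall x y, Rle (nA (x * y)) (Rmult (nA x) (nA y));
  br_complete : forall u : nat -> A, cauchy_seq nA u ->
      exists l, converges_to nA u l }.

Definition UnitalBanachRing (A : nzRingType) (nA : A -> R) : Prop :=
  BanachRing nA /\ nA 1 = Rone.

Record CompleteValuationField (K : fieldType) (nK : K -> R) : Prop := {
  vf_nonneg : forall x, Rle Rzero (nK x);
  vf_definite : forall x, nK x = Rzero <-> x = 0;
  vf_mult : forall x y, nK (x * y) = Rmult (nK x) (nK y);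
  vf_triangle : forall x y, Rle (nK (x + y)) (Rplus (nK x) (nK y));
  vf_complete : forall u : nat -> K, cauchy_seq nK u ->
      exists l, converges_to nK u l }.

Definition closed_subfield (K : fieldType) (nK : K -> R) (P : K -> Prop) : Prop :=
  [/\ P 0, P 1,
      (forall x y, P x -> P y -> P (x - y)),
      (forall x y, P x -> P y -> P (x * y)) &
      (forall x, P x -> x != 0 -> P (x^-1))] /\
      (forall (u : nat -> K) l, (forall n, P (u n)) -> converges_to nK u l -> P l).

Definition minimal_cvf (K : fieldType) (nK : K -> R) : Prop :=
  CompleteValuationField nK /\
  forall P : K -> Prop, closed_subfield nK P -> forall x, P x.

Definition unital_K_Banach_algebra (K : fieldType) (nK : K -> R)
    (A : nzRingType) (nA : A -> R) (f : {rmorphism K -> A}) : Prop :=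
  [/\ UnitalBanachRing nA,
      (forall k a, f k * a = a * f k) &
      (forall k, Rle (nA (f k)) (nK k))].

(* A formal sum  sum_k a_k (x) b_k  is a list of pairs. *)
Definition ftens (A B : Type) := seq (A * B).

(* Two formal sums represent the same element of A (x)_Z B iff every
   biadditive map into an abelian group takes the same value on them
   (universal property of the tensor product over Z). *)
Definition biadditive (A B : zmodType) (M : zmodType) (beta : A -> B -> M) : Prop :=
  (forall a a' b, beta (a + a') b = beta a b + beta a' b) /\
  (forall a b b', beta a (b + b') = beta a b + beta a b').

Definition tens_eq_Z (A B : zmodType) (z w : ftens A B) : Prop :=
  forall (M : zmodType) (beta : A -> B -> M), biadditive beta ->
    \sum_(p <- z) beta p.1 p.2 = \sum_(p <- w) beta p.1 p.2.

(* Same over K, where A and B are K-modules via fA, fB (k.a := fA k * a):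
   the test maps are moreover K-balanced. *)
Definition tens_eq_K (K : fieldType) (A B : nzRingType)
    (fA : K -> A) (fB : K -> B) (z w : ftens A B) : Prop :=
  forall (M : zmodType) (beta : A -> B -> M), biadditive beta ->
    (forall k a b, beta (fA k * a) b = beta a (fB k * b)) ->
    \sum_(p <- z) beta p.1 p.2 = \sum_(p <- w) beta p.1 p.2.

Definition cost_sum (A B : Type) (nA : A -> R) (nB : B -> R) (z : ftens A B) : R :=
  foldr (fun p r => Rplus (Rmult (nA p.1) (nB p.2)) r) Rzero z.
Definition cost_max (A B : Type) (nA : A -> R) (nB : B -> R) (z : ftens A B) : R :=
  foldr (fun p r => Rmax (Rmult (nA p.1) (nB p.2)) r) Rzero z.

Definition Rinf (E : R -> Prop) : R :=
  epsilon (inhabits Rzero)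
    (fun m => (forall x, E x -> Rle m x) /\
              (forall m', (forall x, E x -> Rle m' x) -> Rle m' m)).

Definition proj_norm (A B : Type) (teq : ftens A B -> ftens A B -> Prop)
    (cost : ftens A B -> R) (z : ftens A B) : R :=
  Rinf (fun r => exists w, teq w z /\ r = cost w).

Definition fsub (A B : zmodType) (z w : ftens A B) : ftens A B :=
  z ++ [seq (- p.1, p.2) | p <- w].
Definition fmul (A B : nzRingType) (z w : ftens A B) : ftens A B :=
  [seq (p.1 * q.1, p.2 * q.2) | p <- z, q <- w].

(* ---------- completion of (A (x)_T B, pn) ----------
   Elements: Cauchy sequences of formal sums; two are identified when
   pn (x_n - y_n) -> 0; the norm of x is lim pn (x_n). *)
Section Completion.
Variables (A B : zmodType) (pn : ftens A B -> R).
Definition ccauchy (x : nat -> ftens A B) : Prop :=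
  forall eps : R, Rlt Rzero eps ->
    exists N : nat, forall m n : nat, (N <= m)%N -> (N <= n)%N ->
      Rlt (pn (fsub (x m) (x n))) eps.
Definition ceq (x y : nat -> ftens A B) : Prop :=
  Un_cv (fun n => pn (fsub (x n) (y n))) Rzero.
Definition cnorm (x : nat -> ftens A B) (r : R) : Prop :=
  Un_cv (fun n => pn (x n)) r.
End Completion.

(* The canonical map between the completions of (A (x) B, pn1) and
   (A (x) B, pn2) induced by the identity on simple tensors (i.e. the identity
   on formal sums) is well defined and is an isometric isomorphism (it is
   automatically a ring homomorphism, since the product is computed
   representative-wise by fmul in both completions). *)
Definition canonical_isometric_iso (A B : nzRingType) (pn1 pn2 : ftens A B -> R) : Prop :=
  [/\
      (forall x, ccauchy pn1 x -> ccauchy pn2 x),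
      (* well defined and injective *)
      (forall x y, ccauchy pn1 x -> ccauchy pn1 y -> (ceq pn1 x y <-> ceq pn2 x y)),
      (forall y, ccauchy pn2 y -> exists x, ccauchy pn1 x /\ ceq pn2 x y),
      (forall x, ccauchy pn1 x -> forall r, cnorm pn1 x r <-> cnorm pn2 x r) &
      (forall x y : nat -> ftens A B, ccauchy pn1 x -> ccauchy pn1 y ->
         ceq pn2 (fun n => fmul (x n) (y n)) (fun n => fmul (x n) (y n)))].

(* Every representation of z over Z is one over K, so the K-projective seminorm
   is at most the Z-projective one.  Conversely, call k balanced when every
   relation k a (x) b - a (x) k b has Z-projective seminorm 0.  Balanced scalars
   form a subfield, closed because the seminorm of such a relation is at most
   2 |k| ||a|| ||b|| (the structure maps are contractive); by minimality every
   scalar is balanced.  Then A (x)_Z B modulo null vectors is a K-balanced test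
   module, so w - z is null whenever w represents z over K, and the Z-seminorm of
   z is at most the cost of w.  The two seminorms coincide, and the canonical map
   between the completions is the identity. *)

From Stdlib Require Import Reals Lra ClassicalEpsilon FunctionalExtensionality.
From HB Require Import structures.
From mathcomp Require Import all_boot all_order all_algebra generic_quotient.
Set Implicit Arguments. Unset Strict Implicit. Unset Printing Implicit Defensive.
Import GRing.Theory.
Local Open Scope quotient_scope.

Section RealFacts.
Local Open Scope R_scope.

Lemma Rinf_spec (E : R -> Prop) : (exists x, E x) -> (forall x, E x -> 0 <= x) ->
  (forall x, E x -> Rinf E <= x) /\
  (forall m, (forall x, E x -> m <= x) -> m <= Rinf E).
Proof.
move=> [x0 Ex0] E_ge0; rewrite /Rinf; apply epsilon_spec.
have [m [m_ub m_lub]] : {m | is_lub (fun y => E (- y)) m}.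
  apply: completeness; first by exists 0 => y /E_ge0; lra.
  by exists (- x0); rewrite Ropp_involutive.
exists (- m); split.
- move=> x Ex; have : E (- - x) by rewrite Ropp_involutive.
  by move/m_ub; lra.
- move=> m' m'_lb; suff : m <= - m' by lra.
  by apply: m_lub => y /m'_lb; lra.
Qed.

Lemma le0_of_cv0 (x c : R) (v : nat -> R) :
  0 <= c -> (forall n, x <= c * v n) -> Un_cv v 0 -> x <= 0.
Proof.
move=> c_ge0 x_le v_cv0; apply: Rle_plus_epsilon => eps eps_gt0.
pose q := eps / (c + 1).
have q_gt0 : 0 < q by apply: Rdiv_lt_0_compat; lra.
have qE : q * (c + 1) = eps by rewrite /q; field; lra.
have [N vN] := v_cv0 q q_gt0.
have := vN N (le_n N); rewrite /R_dist Rminus_0_r => vN_lt.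
have := x_le N; have := Rle_abs (v N); have := Rabs_pos (v N); nra.
Qed.

End RealFacts.

Section FormalSums.
Local Open Scope ring_scope.
Variables A B : zmodType.
Implicit Types u v w : ftens A B.

Definition fopp u : ftens A B := [seq (- p.1, p.2) | p <- u].

Lemma foppK : involutive fopp.
Proof. by elim=> //= -[a b] u /= ->; rewrite opprK. Qed.

Definition feval (M : zmodType) (beta : A -> B -> M) u : M :=
  \sum_(p <- u) beta p.1 p.2.

Lemma tens_eq_ZE u v :
  tens_eq_Z u v <->
  forall (M : zmodType) (beta : A -> B -> M), biadditive beta -> feval beta u = feval beta v.
Proof. by []. Qed.

Section Biadditive.
Variables (M : zmodType) (beta : A -> B -> M).
Hypothesis beta_biadd : biadditive beta.

Lemma biadd0l b : beta 0 b = 0.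
Proof.
have := beta_biadd.1 0 0 b; rewrite addr0 => /esym/eqP.
by rewrite -subr_eq0 addrK => /eqP.
Qed.

Lemma biadd0r a : beta a 0 = 0.
Proof.
have := beta_biadd.2 a 0 0; rewrite addr0 => /esym/eqP.
by rewrite -subr_eq0 addrK => /eqP.
Qed.

Lemma biaddNl a b : beta (- a) b = - beta a b.
Proof. by apply: (addrI (beta a b)); rewrite -beta_biadd.1 !subrr biadd0l. Qed.

Lemma biaddNr a b : beta a (- b) = - beta a b.
Proof. by apply: (addrI (beta a b)); rewrite -beta_biadd.2 !subrr biadd0r. Qed.

Lemma biaddBl a a' b : beta (a - a') b = beta a b - beta a' b.
Proof. by rewrite beta_biadd.1 biaddNl. Qed.

Lemma biaddBr a b b' : beta a (b - b') = beta a b - beta a b'.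
Proof. by rewrite beta_biadd.2 biaddNr. Qed.

Lemma feval_cat u v : feval beta (u ++ v) = feval beta u + feval beta v.
Proof. exact: big_cat. Qed.

Lemma feval_fopp u : feval beta (fopp u) = - feval beta u.
Proof.
rewrite /feval big_map; elim: u => [|p u IHu]; first by rewrite !big_nil oppr0.
by rewrite !big_cons IHu biaddNl opprD.
Qed.

Lemma feval_fsub u v : feval beta (fsub u v) = feval beta u - feval beta v.
Proof. by rewrite feval_cat feval_fopp. Qed.

End Biadditive.

Lemma tens_eq_Z_refl u : tens_eq_Z u u.
Proof. by []. Qed.

Lemma tens_eq_Z_sym u v : tens_eq_Z u v -> tens_eq_Z v u.
Proof. by move=> uv M beta hbeta; rewrite (uv M beta hbeta). Qed.

Lemma tens_eq_Z_trans u v w : tens_eq_Z u v -> tens_eq_Z v w -> tens_eq_Z u w.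
Proof. by move=> uv vw M beta hbeta; rewrite (uv M beta hbeta) (vw M beta hbeta). Qed.

Lemma tens_eq_Z_cat u u' v v' :
  tens_eq_Z u u' -> tens_eq_Z v v' -> tens_eq_Z (u ++ v) (u' ++ v').
Proof.
move=> /tens_eq_ZE uu' /tens_eq_ZE vv'; apply/tens_eq_ZE => M beta hbeta.
by rewrite !feval_cat (uu' M beta hbeta) (vv' M beta hbeta).
Qed.

Lemma tens_eq_Z_fopp u u' : tens_eq_Z u u' -> tens_eq_Z (fopp u) (fopp u').
Proof.
move=> /tens_eq_ZE uu'; apply/tens_eq_ZE => M beta hbeta.
by rewrite !feval_fopp // (uu' M beta hbeta).
Qed.

Lemma tens_eq_Z_fsub_nil u v : tens_eq_Z u v -> tens_eq_Z (fsub u v) [::].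
Proof.
move=> /tens_eq_ZE uv; apply/tens_eq_ZE => M beta hbeta.
by rewrite feval_fsub // (uv M beta hbeta) subrr /feval big_nil.
Qed.

End FormalSums.

Section TensSeminorm.
Local Open Scope R_scope.
Variables A B : zmodType.

Record tens_seminorm := TensSeminorm {
  tsn :> ftens A B -> R;
  tsn_tens_eq : forall u v, tens_eq_Z u v -> tsn u = tsn v;
  tsn_ge0 : forall u, 0 <= tsn u;
  tsn_nil : tsn [::] = 0;
  tsn_cat : forall u v, tsn (u ++ v) <= tsn u + tsn v;
  tsn_fopp : forall u, tsn (fopp u) = tsn u }.

Variable g : tens_seminorm.
Implicit Types u v w x y z : ftens A B.

Lemma tsn_null u : tens_eq_Z u [::] -> g u = 0.
Proof. by move=> /tsn_tens_eq ->; rewrite tsn_nil. Qed.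

Lemma tsn_null_cat u v w : g u = 0 -> g v = 0 -> tens_eq_Z w (u ++ v) -> g w = 0.
Proof.
move=> gu gv /tsn_tens_eq ->; apply: Rle_antisym; last exact: tsn_ge0.
by have := tsn_cat g u v; rewrite gu gv Rplus_0_r.
Qed.

Lemma tsn_fsubC x y : g (fsub x y) = g (fsub y x).
Proof.
rewrite -(tsn_fopp g (fsub y x)); apply: tsn_tens_eq; apply/tens_eq_ZE => M beta hbeta.
by rewrite feval_fopp // !feval_fsub // opprB.
Qed.

Lemma tsn_null_fsub_cat x x' y y' :
  g (fsub x x') = 0 -> g (fsub y y') = 0 -> g (fsub (x ++ y) (x' ++ y')) = 0.
Proof.
move=> gx gy; apply: tsn_null_cat gx gy _; apply/tens_eq_ZE => M beta hbeta.
by rewrite !(feval_cat, feval_fsub) // opprD addrACA.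
Qed.

Definition tsn_eqv x y : bool := Req_dec_T (g (fsub x y)) 0.

Lemma tsn_eqvP x y : reflect (g (fsub x y) = 0) (tsn_eqv x y).
Proof. exact: sumboolP. Qed.

Lemma tsn_eqv_refl : reflexive tsn_eqv.
Proof. by move=> x; apply/tsn_eqvP/tsn_null/tens_eq_Z_fsub_nil. Qed.

Lemma tsn_eqv_sym : symmetric tsn_eqv.
Proof. by move=> x y; apply/tsn_eqvP/tsn_eqvP; rewrite tsn_fsubC. Qed.

Lemma tsn_eqv_trans : transitive tsn_eqv.
Proof.
move=> y x z /tsn_eqvP gxy /tsn_eqvP gyz; apply/tsn_eqvP.
apply: tsn_null_cat gxy gyz _; apply/tens_eq_ZE => M beta hbeta.
by rewrite feval_cat !feval_fsub // addrA subrK.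
Qed.

Definition tsn_equiv := EquivRel tsn_eqv tsn_eqv_refl tsn_eqv_sym tsn_eqv_trans.

Definition tsn_quot := {eq_quot tsn_equiv}%qT.

Definition tsnq_zero : tsn_quot := \pi_tsn_quot [::].
Definition tsnq_opp (q : tsn_quot) : tsn_quot := \pi_tsn_quot (fopp (repr q)).
Definition tsnq_add (q r : tsn_quot) : tsn_quot := \pi_tsn_quot (repr q ++ repr r).

Lemma tsnq_eqE x y : \pi_tsn_quot x = \pi_tsn_quot y <-> g (fsub x y) = 0.
Proof.
split=> [/(@eqquotP _ tsn_equiv tsn_quot)/tsn_eqvP // | /tsn_eqvP].
exact/(@eqquotP _ tsn_equiv tsn_quot).
Qed.

Lemma tsn_repr_pi x : g (fsub (repr (\pi_tsn_quot x)) x) = 0.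
Proof. by apply/tsnq_eqE; rewrite reprK. Qed.

Lemma tsnq_add_pi x y : tsnq_add (\pi x) (\pi y) = \pi_tsn_quot (x ++ y).
Proof. by apply/tsnq_eqE/tsn_null_fsub_cat; apply: tsn_repr_pi. Qed.

Lemma tsnq_opp_pi x : tsnq_opp (\pi x) = \pi_tsn_quot (fopp x).
Proof.
apply/tsnq_eqE; rewrite -(tsn_repr_pi x) -tsn_fopp.
apply: tsn_tens_eq; apply/tens_eq_ZE => M beta hbeta.
by rewrite !(feval_fopp, feval_fsub) // opprB opprK addrC.
Qed.

Lemma tsnq_addA : associative tsnq_add.
Proof.
by elim/quotW=> x; elim/quotW=> y; elim/quotW=> z; rewrite !tsnq_add_pi catA.
Qed.

Lemma tsnq_addC : commutative tsnq_add.
Proof.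
elim/quotW=> x; elim/quotW=> y; rewrite !tsnq_add_pi; apply/tsnq_eqE/tsn_null.
by apply: tens_eq_Z_fsub_nil => M beta hbeta; rewrite -!/(feval _ _) !feval_cat addrC.
Qed.

Lemma tsnq_add0 : left_id tsnq_zero tsnq_add.
Proof. by elim/quotW=> x; rewrite tsnq_add_pi. Qed.

Lemma tsnq_addN : left_inverse tsnq_zero tsnq_opp tsnq_add.
Proof.
elim/quotW=> x; rewrite tsnq_opp_pi tsnq_add_pi; apply/tsnq_eqE/tsn_null.
apply: tens_eq_Z_fsub_nil => M beta hbeta.
by rewrite -!/(feval _ _) feval_cat feval_fopp // addNr /feval big_nil.
Qed.

End TensSeminorm.

HB.instance Definition _ (A B : zmodType) (g : tens_seminorm A B) :=
  Choice.on (tsn_quot g).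
HB.instance Definition _ (A B : zmodType) (g : tens_seminorm A B) :=
  GRing.isZmodule.Build (tsn_quot g)
    (@tsnq_addA A B g) (@tsnq_addC A B g) (@tsnq_add0 A B g) (@tsnq_addN A B g).

Lemma tsnq_piD (A B : zmodType) (g : tens_seminorm A B) (x y : ftens A B) :
  ((\pi x : tsn_quot g) + \pi y)%R = \pi_(tsn_quot g) (x ++ y).
Proof. exact: tsnq_add_pi. Qed.

Section BalancedNull.
Local Open Scope R_scope.
Variables (K : fieldType) (A B : nzRingType) (fA : K -> A) (fB : K -> B).

Definition balance_rel k a b : ftens A B :=
  fsub [:: ((fA k * a)%R, b)] [:: (a, (fB k * b)%R)].

Lemma feval_balance_rel (M : zmodType) (beta : A -> B -> M) k a b :
  biadditive beta -> feval beta (balance_rel k a b) = (beta (fA k * a) b - beta a (fB k * b))%R.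
Proof. by move=> hbeta; rewrite feval_fsub // /feval !big_seq1. Qed.

(* The quotient of formal sums by g-null ones is a test module for tens_eq_K:
   [a (x) b] is biadditive, and balanced once g kills every balance relation. *)
Lemma tsn_null_fsub_of_tens_eq_K (g : tens_seminorm A B) :
  (forall k a b, g (balance_rel k a b) = 0) ->
  forall w z, tens_eq_K fA fB w z -> g (fsub w z) = 0.
Proof.
move=> g_rel w z wz.
pose beta a b : tsn_quot g := \pi [:: (a, b)].
have feval_beta u : feval beta u = \pi u.
  elim: u => [|[a b] u IHu]; first by rewrite /feval big_nil.
  by rewrite /feval big_cons -/(feval _ _) IHu tsnq_piD.
have beta_biadd : biadditive beta.
  by split=> *; rewrite /beta tsnq_piD; apply/tsnq_eqE/tsn_null/tens_eq_Z_fsub_nil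
    => M gamma [gammaD1 gammaD2]; rewrite !big_cons !big_nil /= !addr0 ?gammaD1 ?gammaD2.
have beta_bal k a b : beta (fA k * a)%R b = beta a (fB k * b)%R by apply/tsnq_eqE/g_rel.
by apply/tsnq_eqE; rewrite -!feval_beta; apply: (wz _ beta beta_biadd beta_bal).
Qed.

End BalancedNull.

Section ProjNorm.
Local Open Scope R_scope.
Variables (A B : Type) (cost : ftens A B -> R).
Hypothesis cost_ge0 : forall w, 0 <= cost w.
Variable teq : ftens A B -> ftens A B -> Prop.

Let proj_norm_spec z : teq z z ->
  (forall w, teq w z -> proj_norm teq cost z <= cost w) /\
  (forall c, (forall w, teq w z -> c <= cost w) -> c <= proj_norm teq cost z).
Proof.
move=> zz; have [inf_le le_inf] := @Rinf_spec (fun r => exists w, teq w z /\ r = cost w)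
  (ex_intro _ (cost z) (ex_intro _ z (conj zz erefl)))
  (fun x '(ex_intro w (conj _ e)) => eq_ind_r _ (cost_ge0 w) e).
split=> [w wz | c c_le]; first by apply: inf_le; exists w.
by apply: le_inf => _ [w [wz ->]]; apply: c_le.
Qed.

Lemma proj_norm_le w z : teq w z -> teq z z -> proj_norm teq cost z <= cost w.
Proof. by move=> wz /proj_norm_spec[le _]; apply: le. Qed.

Lemma proj_norm_glb c z :
  teq z z -> (forall w, teq w z -> c <= cost w) -> c <= proj_norm teq cost z.
Proof. by move=> /proj_norm_spec[_ glb]; apply: glb. Qed.

End ProjNorm.

Section ProjectiveCost.
Local Open Scope R_scope.
Variables (A B : zmodType) (nA : A -> R) (nB : B -> R).

Record projective_cost (cost : ftens A B -> R) : Prop := {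
  pcost_ge0 : forall w, 0 <= cost w;
  pcost_nil : cost [::] = 0;
  pcost_cat : forall u v, cost (u ++ v) <= cost u + cost v;
  pcost_fopp : forall u, cost (fopp u) = cost u;
  pcost_pure : forall a b, cost [:: (a, b)] <= nA a * nB b }.

Hypothesis nA_ge0 : forall a, 0 <= nA a.
Hypothesis nB_ge0 : forall b, 0 <= nB b.
Hypothesis nAN : forall a, nA (- a)%R = nA a.

Lemma cost_sum_projective : projective_cost (cost_sum nA nB).
Proof.
have ge0 w : 0 <= cost_sum nA nB w.
  by elim: w => [|p w IHw] /=; [exact: Rle_refl | have := Rmult_le_pos _ _ (nA_ge0 p.1) (nB_ge0 p.2); lra].
split=> //= [u v | u | a b]; last by rewrite /Rzero; lra.
- by elim: u => [|p u IHu] /=; [rewrite /Rzero; lra | lra].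
- by elim: u => //= p u ->; rewrite nAN.
Qed.

Lemma cost_max_projective : projective_cost (cost_max nA nB).
Proof.
have ge0 w : 0 <= cost_max nA nB w.
  by elim: w => [|p w IHw] /=; [exact: Rle_refl | apply: Rle_trans IHw (Rmax_r _ _)].
split=> //= [u v | u | a b].
- elim: u => [|p u IHu] /=; first by rewrite /Rzero; lra.
  have := ge0 v; have := Rmax_l (nA p.1 * nB p.2) (cost_max nA nB u).
  have := Rmax_r (nA p.1 * nB p.2) (cost_max nA nB u).
  by move=> *; apply: Rmax_lub; lra.
- by elim: u => //= p u ->; rewrite nAN.
- by rewrite /Rzero; apply: Rmax_lub; [lra | have := Rmult_le_pos _ _ (nA_ge0 a) (nB_ge0 b); lra].
Qed.

End ProjectiveCost.

Section ZProjNorm.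
Local Open Scope R_scope.
Variables (A B : zmodType) (nA : A -> R) (nB : B -> R) (cost : ftens A B -> R).
Hypothesis hcost : projective_cost nA nB cost.
Implicit Types u v w z : ftens A B.

Local Notation pnZ := (proj_norm (@tens_eq_Z A B) cost).

Lemma pnZ_le w z : tens_eq_Z w z -> pnZ z <= cost w.
Proof. by move=> wz; apply: (proj_norm_le (pcost_ge0 hcost)). Qed.

Lemma pnZ_glb c z : (forall w, tens_eq_Z w z -> c <= cost w) -> c <= pnZ z.
Proof. exact: (proj_norm_glb (pcost_ge0 hcost) (tens_eq_Z_refl z)). Qed.

Lemma pnZ_ge0 z : 0 <= pnZ z.
Proof. by apply: pnZ_glb => w _; apply: pcost_ge0 hcost w. Qed.

Lemma pnZ_tens_eq u v : tens_eq_Z u v -> pnZ u = pnZ v.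
Proof.
move=> uv; apply: Rle_antisym; apply: pnZ_glb => w wz; apply: pnZ_le.
- exact: tens_eq_Z_trans wz (tens_eq_Z_sym uv).
- exact: tens_eq_Z_trans wz uv.
Qed.

Lemma pnZ_nil : pnZ [::] = 0.
Proof.
apply: Rle_antisym; last exact: pnZ_ge0.
by rewrite -(pcost_nil hcost); apply: pnZ_le.
Qed.

Lemma pnZ_approx u eps : 0 < eps -> exists u', tens_eq_Z u' u /\ cost u' < pnZ u + eps.
Proof.
move=> eps_gt0; apply: NNPP => no_u'.
suff : pnZ u + eps <= pnZ u by lra.
by apply: pnZ_glb => w wu; apply: Rnot_lt_le => lt_w; apply: no_u'; exists w.
Qed.

Lemma pnZ_cat u v : pnZ (u ++ v) <= pnZ u + pnZ v.
Proof.
apply: Rle_plus_epsilon => eps eps_gt0.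
have [|u' [u'u lt_u']] := @pnZ_approx u (eps / 2); first lra.
have [|v' [v'v lt_v']] := @pnZ_approx v (eps / 2); first lra.
have := pnZ_le (tens_eq_Z_cat u'u v'v); have := pcost_cat hcost u' v'; lra.
Qed.

Lemma pnZ_fopp u : pnZ (fopp u) = pnZ u.
Proof.
have le_fopp w : pnZ (fopp w) <= pnZ w.
  apply: pnZ_glb => w' w'w; rewrite -(pcost_fopp hcost).
  exact/pnZ_le/tens_eq_Z_fopp.
by apply: Rle_antisym => //; rewrite -{1}(foppK u); apply: le_fopp.
Qed.

Definition pnZ_seminorm : tens_seminorm A B :=
  TensSeminorm pnZ_tens_eq pnZ_ge0 pnZ_nil pnZ_cat pnZ_fopp.

End ZProjNorm.

Lemma canonical_isometric_iso_refl (A B : nzRingType) (pn : ftens A B -> R) :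
  (forall z, pn (fsub z z) = Rzero) -> canonical_isometric_iso pn pn.
Proof.
move=> pn_fsubzz.
have cv_diag x : Un_cv (fun n => pn (fsub (x n) (x n))) Rzero.
  move=> eps eps_gt0; exists 0%N => n _.
  by rewrite pn_fsubzz /R_dist /Rzero Rminus_diag Rabs_R0.
split=> // [y y_cauchy | x y _ _]; first by exists y; split; last exact (cv_diag y).
exact (cv_diag (fun n => fmul (x n) (y n))).
Qed.

Section Minimality.
Local Open Scope R_scope.
Variables (K : fieldType) (nK : K -> R) (A B : nzRingType) (nA : A -> R) (nB : B -> R).
Variables (fA : {rmorphism K -> A}) (fB : {rmorphism K -> B}) (cost : ftens A B -> R).
Hypothesis hcost : projective_cost nA nB cost.
Hypotheses (nA_ge0 : forall a, 0 <= nA a) (nB_ge0 : forall b, 0 <= nB b).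
Hypothesis nA_mul : forall a a', nA (a * a')%R <= nA a * nA a'.
Hypothesis nB_mul : forall b b', nB (b * b')%R <= nB b * nB b'.
Hypotheses (fA_contr : forall k, nA (fA k) <= nK k) (fB_contr : forall k, nB (fB k) <= nK k).

Local Notation G := (pnZ_seminorm hcost).
Local Notation rel := (balance_rel fA fB).

Definition balanced_scalar k := forall a b, G (rel k a b) = 0.

Lemma balance_relB x y a b :
  tens_eq_Z (rel (x - y)%R a b) (rel x a b ++ fopp (rel y a b)).
Proof.
apply/tens_eq_ZE => M beta hbeta.
rewrite [RHS]feval_cat feval_fopp // !feval_balance_rel // !rmorphB /= !mulrBl.
rewrite biaddBl // biaddBr // !opprB addrACA [RHS]addrACA.
by congr (_ + _)%R; rewrite addrC.
Qed.

Lemma balance_relM x y a b :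
  tens_eq_Z (rel (x * y)%R a b) (rel x (fA y * a)%R b ++ rel y a (fB x * b)%R).
Proof.
apply/tens_eq_ZE => M beta hbeta.
rewrite [RHS]feval_cat !feval_balance_rel // !rmorphM /= !mulrA.
by rewrite -[(fB y * fB x)%R]rmorphM mulrC rmorphM /= addrA subrK.
Qed.

Lemma balance_relV x a b : x != 0%R ->
  tens_eq_Z (rel x^-1 a b) (fopp (rel x (fA x^-1 * a)%R (fB x^-1 * b)%R)).
Proof.
move=> x_neq0; apply/tens_eq_ZE => M beta hbeta.
rewrite feval_fopp // !feval_balance_rel // !mulrA -!rmorphM /= mulfV //.
by rewrite !rmorph1 !mul1r opprB.
Qed.

Lemma balance_rel_norm_le k a b : G (rel k a b) <= 2 * (nA a * nB b) * nK k.
Proof.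
have scaleA : nA (fA k * a)%R <= nK k * nA a.
  exact: Rle_trans (nA_mul _ _) (Rmult_le_compat_r _ _ _ (nA_ge0 a) (fA_contr k)).
have scaleB : nB (fB k * b)%R <= nK k * nB b.
  exact: Rle_trans (nB_mul _ _) (Rmult_le_compat_r _ _ _ (nB_ge0 b) (fB_contr k)).
have cost_rel : cost (rel k a b) <= cost [:: (fA k * a, b)%R] + cost [:: (a, fB k * b)%R].
  have := pcost_cat hcost [:: (fA k * a, b)%R] (fopp [:: (a, fB k * b)%R]).
  by rewrite (pcost_fopp hcost); apply.
apply: Rle_trans (pnZ_le hcost (tens_eq_Z_refl (rel k a b))) (Rle_trans _ _ _ cost_rel _).
have -> : 2 * (nA a * nB b) * nK k = nK k * nA a * nB b + nA a * (nK k * nB b) by ring.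
apply: Rplus_le_compat.
- exact: Rle_trans (pcost_pure hcost _ _) (Rmult_le_compat_r _ _ _ (nB_ge0 b) scaleA).
- exact: Rle_trans (pcost_pure hcost _ _) (Rmult_le_compat_l _ _ _ (nA_ge0 a) scaleB).
Qed.

Lemma balanced_scalar1 : balanced_scalar 1%R.
Proof.
move=> a b; apply/tsn_null/tens_eq_ZE => M beta hbeta.
by rewrite feval_balance_rel // !rmorph1 !mul1r subrr /feval big_nil.
Qed.

Lemma balanced_scalarB x y :
  balanced_scalar x -> balanced_scalar y -> balanced_scalar (x - y)%R.
Proof.
move=> hx hy a b; apply: tsn_null_cat (hx a b) _ (balance_relB x y a b).
by rewrite tsn_fopp hy.
Qed.

Lemma balanced_scalarM x y :
  balanced_scalar x -> balanced_scalar y -> balanced_scalar (x * y)%R.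
Proof. by move=> hx hy a b; apply: tsn_null_cat (hx _ b) (hy a _) (balance_relM x y a b). Qed.

Lemma balanced_scalarV x : balanced_scalar x -> x != 0%R -> balanced_scalar x^-1.
Proof.
by move=> bx x_neq0 a b; rewrite (tsn_tens_eq _ (balance_relV a b x_neq0)) tsn_fopp bx.
Qed.

Lemma balanced_scalar_lim (u : nat -> K) l :
  (forall n, balanced_scalar (u n)) -> converges_to nK u l -> balanced_scalar l.
Proof.
move=> bu u_cvl a b; apply: Rle_antisym; last exact: tsn_ge0.
apply: (le0_of_cv0 (c := 2 * (nA a * nB b))) u_cvl => [|n].
  by have := Rmult_le_pos _ _ (nA_ge0 a) (nB_ge0 b); lra.
have lE : l = (u n - (u n - l))%R by rewrite subKr.
apply: Rle_trans (balance_rel_norm_le (u n - l)%R a b).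
have := tsn_cat G (rel (u n) a b) (fopp (rel (u n - l)%R a b)).
by rewrite bu tsn_fopp -(tsn_tens_eq _ (balance_relB _ _ a b)) -lE Rplus_0_l.
Qed.

Lemma balanced_scalar_closed : closed_subfield nK balanced_scalar.
Proof.
split; last exact: balanced_scalar_lim.
split; [| exact: balanced_scalar1 | exact: balanced_scalarB | exact: balanced_scalarM
       | exact: balanced_scalarV].
by rewrite -(subrr 1%R); apply: balanced_scalarB; apply: balanced_scalar1.
Qed.

Hypothesis K_minimal : forall P, closed_subfield nK P -> forall x, P x.

Lemma proj_norm_K_eq_Z z :
  proj_norm (tens_eq_K fA fB) cost z = proj_norm (@tens_eq_Z A B) cost z.
Proof.
have K_balanced := K_minimal balanced_scalar_closed.
apply: Rle_antisym.
  apply: (pnZ_glb hcost) => w wz.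
  by apply: (proj_norm_le (pcost_ge0 hcost)) => // M beta hbeta _; apply: wz.
apply: (proj_norm_glb (pcost_ge0 hcost)) => // w wz.
have null_wz : G (fsub w z) = 0.
  by apply: tsn_null_fsub_of_tens_eq_K wz => k a b; apply: K_balanced.
have z_split : tens_eq_Z z (w ++ fsub z w).
  by apply/tens_eq_ZE => M beta hbeta; rewrite feval_cat feval_fsub // addrC subrK.
have := tsn_cat G w (fsub z w).
rewrite -(tsn_tens_eq G z_split) tsn_fsubC null_wz Rplus_0_r => le_zw.
exact: Rle_trans le_zw (pnZ_le hcost (tens_eq_Z_refl w)).
Qed.

Lemma canonical_iso_Z_K :
  canonical_isometric_iso (proj_norm (@tens_eq_Z A B) cost) (proj_norm (tens_eq_K fA fB) cost).
Proof.
rewrite (functional_extensionality _ _ proj_norm_K_eq_Z).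
apply: canonical_isometric_iso_refl => z.
exact: (@tsn_null _ _ G _ (tens_eq_Z_fsub_nil (tens_eq_Z_refl z))).
Qed.

End Minimality.

Theorem lemma2p3 (K : fieldType) (nK : K -> R)
  (A : nzRingType) (nA : A -> R) (fA : {rmorphism K -> A})
  (B : nzRingType) (nB : B -> R) (fB : {rmorphism K -> B}) :
  minimal_cvf nK ->
  unital_K_Banach_algebra nK nA fA ->
  unital_K_Banach_algebra nK nB fB ->
  canonical_isometric_iso
    (proj_norm (@tens_eq_Z A B) (cost_sum nA nB))
    (proj_norm (tens_eq_K fA fB) (cost_sum nA nB))
  /\
  canonical_isometric_iso
    (proj_norm (@tens_eq_Z A B) (cost_max nA nB))
    (proj_norm (tens_eq_K fA fB) (cost_max nA nB)).
Proof.
move=> [_ K_minimal] [[A_banach _] _ fA_contr] [[B_banach _] _ fB_contr].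
have nA_ge0 := br_nonneg A_banach; have nB_ge0 := br_nonneg B_banach.
have nAN := br_opp A_banach.
have iso_Z_K := canonical_iso_Z_K _ nA_ge0 nB_ge0 (br_submult A_banach) (br_submult B_banach)
  fA_contr fB_contr K_minimal.
split; apply: iso_Z_K.
- exact: cost_sum_projective nA_ge0 nB_ge0 nAN.
- exact: cost_max_projective nA_ge0 nB_ge0 nAN.
Qed.
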